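(* Let $R$ be as in the standing setup, and let $x\in R$ with $v(x)=e$ (so $xR$ is a minimal reduction of $m$). The following are equivalent: (1) The $m$-adic filtration is essentially divisible with respect to $xR$. (2) $v(m^i\cap xR)=v(m^i)\cap v(xR)$ for all $i\ge 0$. (3) $v(m^i+xR)=v(m^i)\cup v(xR)$ for all $i\ge 0$. (4) $b_j=c_j$ for $j=0,\ldots,e-1$.
   Context: Standing setup: $k$ is a field and $R$ is a complete local domain with $k\subseteq R\subseteq k[[t]]$, residue field $k$, maximal ideal $m$, and nonzero conductor $(R:k[[t]])\neq 0$. Let $v$ be the $t$-adic valuation, $S=v(R)=\{v(r): r\in R, r\neq 0\}$, and $e$ the smallest positive element of $S$ (the multiplicity). For a nonzero ideal $I$, $v(I)=\{v(a): a\in I, a\ne0\}$; $m^0=R$. The Apery set of $S$ with respect to $e$ is $\{w_0,\ldots,w_{e-1}\}$ where $w_j$ is the smallest element of $S$ congruent to $j \pmod e$. For $a\in R$, $\operatorname{ord}(a)=\max\{i: a\in m^i\}$; for $s\in S$, $\operatorname{vord}(s)=\max\{i: s\in v(m^i)\}$. Given $x\in R$ with $v(x)=e$, the $m$-adic filtration is essentially divisible with respect to $xR$ if for every $u\in v(xR)$ there is $a\in xR$ with $v(a)=u$ and $\operatorname{ord}(a)=\operatorname{vord}(u)$. Define $b_j=\max\{i: w_j\in v(m^i)\}$ and $c_j=\max\{i: w_j\in v(m^i+xR)\}$ for $j=0,\dots,e-1$. *)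

(* Formal power series k[[t]] are modelled as functions nat -> k
   (coefficient sequences) with the Cauchy product. *)
From HB Require Import structures.
From Stdlib Require List.
From mathcomp Require Import all_boot all_order all_algebra.
Set Implicit Arguments. Unset Strict Implicit. Unset Printing Implicit Defensive.
Import GRing.Theory.
Local Open Scope ring_scope.

Section PowerSeries.
Variable k : fieldType.

Definition series := nat -> k.

Definition ps_const (c : k) : series := fun n => if n is 0%N then c else 0.
Definition ps0 : series := ps_const 0.
Definition ps1 : series := ps_const 1.
Definition ps_add (f g : series) : series := fun n => f n + g n.
Definition ps_opp (f : series) : series := fun n => - f n.
Definition ps_mul (f g : series) : series :=
  fun n => \sum_(i < n.+1) f i * g (n - i)%N.

(* t-adic valuation as a relation: v(f) = n (f <> 0 is implied). *)
Definition vval (f : series) (n : nat) : Prop :=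
  f n != 0 /\ forall i, (i < n)%N -> f i = 0.

Definition vset (I : series -> Prop) (n : nat) : Prop :=
  exists a, I a /\ vval a n.

Definition subring_with_k (R : series -> Prop) : Prop :=
  [/\ forall c, R (ps_const c),
      forall f g, R f -> R g -> R (ps_add f g),
      forall f, R f -> R (ps_opp f) &
      forall f g, R f -> R g -> R (ps_mul f g)].

Definition conductor_nonzero (R : series -> Prop) : Prop :=
  exists a : series, a <> ps0 /\ forall f : series, R (ps_mul a f).

Definition nonunits (R : series -> Prop) (r : series) : Prop :=
  R r /\ ~ (exists s, R s /\ ps_mul r s = ps1).

(* R local with maximal ideal m = nonunits and residue field k. *)
Definition local_residue_k (R : series -> Prop) : Prop :=
  (forall f g, nonunits R f -> nonunits R g -> nonunits R (ps_add f g)) /\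
  (forall f r, nonunits R f -> R r -> nonunits R (ps_mul f r)) /\
  (forall r, R r -> exists c, nonunits R (ps_add r (ps_opp (ps_const c)))).

Definition sum_prods (s : seq (series * series)) : series :=
  foldr (fun p acc => ps_add (ps_mul p.1 p.2) acc) ps0 s.

Definition ideal_mul (I J : series -> Prop) (f : series) : Prop :=
  exists s : seq (series * series),
    (forall p, List.In p s -> I p.1 /\ J p.2) /\ f = sum_prods s.

Fixpoint ideal_pow (R m : series -> Prop) (i : nat) : series -> Prop :=
  match i with
  | 0%N => R
  | i'.+1 => ideal_mul m (ideal_pow R m i')
  end.

Definition principal (R : series -> Prop) (x : series) (f : series) : Prop :=
  exists r, R r /\ f = ps_mul x r.

Definition ideal_add (I J : series -> Prop) (f : series) : Prop :=
  exists a b, I a /\ J b /\ f = ps_add a b.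

Definition ideal_cap (I J : series -> Prop) (f : series) : Prop := I f /\ J f.

End PowerSeries.

Definition is_max (P : nat -> Prop) (n : nat) : Prop :=
  P n /\ forall i, P i -> (i <= n)%N.

Definition is_multiplicity (S : nat -> Prop) (e : nat) : Prop :=
  (0 < e)%N /\ S e /\ forall s, S s -> (0 < s)%N -> (e <= s)%N.

Definition is_apery (S : nat -> Prop) (e j w : nat) : Prop :=
  S w /\ w = j %[mod e] /\ forall s, S s -> s = j %[mod e] -> (w <= s)%N.

(* The m-adic filtration is essentially divisible w.r.t. xR:
   every u in v(xR) is v(a) for some a in xR with ord(a) = vord(u). *)
Definition ess_divisible (k : fieldType) (R m : series k -> Prop) (x : series k) :=
  forall u, vset (principal R x) u ->
    exists a, principal R x a /\ vval a u /\
      exists n, is_max (fun i => ideal_pow R m i a) n /\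
                is_max (fun i => vset (ideal_pow R m i) u) n.

From Stdlib Require Import Classical FunctionalExtensionality.
From Stdlib Require List.
From mathcomp Require Import all_boot all_order all_algebra zify.
Set Implicit Arguments. Unset Strict Implicit. Unset Printing Implicit Defensive.
Import GRing.Theory.
Local Open Scope ring_scope.

(* Conditions (2) and (3) only involve the valuation sets of the k-subspaces
   A = m^i and B = xR of k[[t]], and they are equivalent as soon as A contains
   every series of large order, which the nonzero conductor guarantees for m^i:
   in either direction one cancels leading coefficients one order at a time,
   and this stops because the order is bounded (by v(a + b), resp. by the order
   from which on everything lies in A). Condition (1) is (2) read through vord.
   Finally v(xR) = e + S: no Apery element lies in v(xR), so (3) forces
   b_j = c_j; conversely every element of S outside v(xR) is an Apery element,
   where b_j = c_j yields (3). *)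

Lemma nat_ind_down (N : nat) (P : nat -> Prop) :
  (forall s, (N <= s)%N -> P s) -> (forall s, (s < N)%N -> P s.+1 -> P s) ->
  forall s, P s.
Proof.
move=> Ptop Pdown s; have [d Ed] : exists d, (N - s = d)%N by eexists.
elim: d s Ed => [|d IH] s Ed; first by apply: Ptop; lia.
by apply: Pdown; [lia | apply: IH; lia].
Qed.

Lemma is_max_exists (P : nat -> Prop) i0 B :
  P i0 -> (forall i, P i -> (i <= B)%N) -> exists n, is_max P n.
Proof.
elim: B i0 => [|B IH] i0 Pi0 leB.
  by exists 0%N; split => [|i /leB]; [have := leB _ Pi0; rewrite leqn0 => /eqP <- |].
have [PB | nPB] := classic (P B.+1); first by exists B.+1.
apply: (IH i0) => // i Pi; have := leB _ Pi; rewrite leq_eqVlt => /orP [/eqP Ei|//].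
by rewrite Ei in Pi.
Qed.

Lemma exists_min (P : nat -> Prop) s0 :
  P s0 -> exists s, P s /\ forall t, P t -> (s <= t)%N.
Proof.
elim/ltn_ind: s0 => s0 IH Ps0.
have [[t [Pt ltts0]] | nlt] := classic (exists t, P t /\ (t < s0)%N).
  exact: (IH t).
exists s0; split => // t Pt; rewrite leqNgt; apply/negP => lt_t; apply: nlt.
by exists t.
Qed.

Section PowerSeries.
Variable k : fieldType.
Implicit Types (f g a b d h : series k) (c : k).

Definition vanishes_below f n := forall i, (i < n)%N -> f i = 0.

Lemma ps0E n : ps0 k n = 0. Proof. by case: n. Qed.

Lemma ps_mul_constE f c n : ps_mul f (ps_const c) n = f n * c.
Proof.
rewrite /ps_mul big_ord_recr /= subnn big1 ?add0r // => i _.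
have : (0 < n - i)%N by rewrite subn_gt0.
by case: (n - i)%N => // j _; rewrite mulr0.
Qed.

Lemma ps_mul_coef0 f g : ps_mul f g 0 = f 0%N * g 0%N.
Proof. by rewrite /ps_mul big_ord1. Qed.

Lemma ps_mul_rev f g n : ps_mul f g n = \sum_(i < n.+1) f (n - i)%N * g i.
Proof.
rewrite /ps_mul (reindex_inj rev_ord_inj) /=; apply: eq_bigr => i _.
by rewrite subSS subKn // -ltnS.
Qed.

Lemma ps_mul0r a : ps_mul a (ps0 k) = ps0 k.
Proof.
apply: functional_extensionality => n.
by rewrite ps0E /ps_mul big1 // => i _; rewrite ps0E mulr0.
Qed.

Lemma ps_mulDr a f g : ps_mul a (ps_add f g) = ps_add (ps_mul a f) (ps_mul a g).
Proof.
apply: functional_extensionality => n.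
by rewrite /ps_mul /ps_add -big_split; apply: eq_bigr => i _; rewrite mulrDr.
Qed.

Lemma ps_mul_constA a f c :
  ps_mul (ps_mul a f) (ps_const c) = ps_mul a (ps_mul f (ps_const c)).
Proof.
apply: functional_extensionality => n.
rewrite ps_mul_constE /ps_mul mulr_suml; apply: eq_bigr => i _.
by rewrite -[X in _ = _ * X]/(ps_mul f (ps_const c) (n - i)%N) ps_mul_constE mulrA.
Qed.

Lemma sum_prods_cat (s1 s2 : seq (series k * series k)) :
  sum_prods (s1 ++ s2) = ps_add (sum_prods s1) (sum_prods s2).
Proof.
elim: s1 => [|p s IH] /=; apply: functional_extensionality => n.
  by rewrite /ps_add ps0E add0r.
by rewrite IH /ps_add addrA.
Qed.

Lemma sum_prods_scale (s : seq (series k * series k)) c :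
  ps_mul (sum_prods s) (ps_const c) =
  sum_prods [seq (p.1, ps_mul p.2 (ps_const c)) | p <- s].
Proof.
apply: functional_extensionality => n.
elim: s => [|p s IH] /=; first by rewrite ps_mul_constE ps0E mul0r.
rewrite ps_mul_constE /ps_add -IH ps_mul_constE mulrDl -ps_mul_constA.
by rewrite ps_mul_constE.
Qed.

Lemma ps_add_shiftr f g a b c :
  ps_add f (ps_mul g (ps_const c)) = ps_add a b ->
  f = ps_add a (ps_add b (ps_mul g (ps_const (- c)))).
Proof.
move=> E; apply: functional_extensionality => i.
have := congr1 (fun h => h i) E; rewrite /ps_add !ps_mul_constE => Ei.
by rewrite mulrN addrA -Ei addrK.
Qed.

Lemma ps_add_shiftl f g a b c :
  ps_add f (ps_mul g (ps_const c)) = ps_add a b ->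
  f = ps_add (ps_add a (ps_mul g (ps_const (- c)))) b.
Proof.
move=> /ps_add_shiftr ->; apply: functional_extensionality => i.
by rewrite /ps_add addrA addrAC.
Qed.

Lemma vanishes_below_le f n p : (p <= n)%N -> vanishes_below f n -> vanishes_below f p.
Proof. by move=> le_pn f0 i lt_ip; apply: f0; apply: leq_trans le_pn. Qed.

Lemma vanishes_belowS f n : vanishes_below f n -> f n = 0 -> vanishes_below f n.+1.
Proof. by move=> f0 fn i; rewrite ltnS leq_eqVlt => /orP [/eqP -> | /f0]. Qed.

Lemma vanishes_below_add f g n :
  vanishes_below f n -> vanishes_below g n -> vanishes_below (ps_add f g) n.
Proof. by move=> f0 g0 i lt_in; rewrite /ps_add f0 ?g0 ?addr0. Qed.

Lemma vanishes_below_scale f c n :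
  vanishes_below f n -> vanishes_below (ps_mul f (ps_const c)) n.
Proof. by move=> f0 i lt_in; rewrite ps_mul_constE f0 ?mul0r. Qed.

Lemma vanishes_below_mul a b p q :
  vanishes_below a p -> vanishes_below b q -> vanishes_below (ps_mul a b) (p + q).
Proof.
move=> a0 b0 j lt_j; rewrite /ps_mul big1 // => i _.
have [lt_ip | le_pi] := ltnP i p; first by rewrite a0 // mul0r.
rewrite b0 ?mulr0 //; have := ltn_ord i; lia.
Qed.

Lemma ps_mul_lead a b p q :
  vanishes_below a p -> vanishes_below b q -> ps_mul a b (p + q)%N = a p * b q.
Proof.
move=> a0 b0; have lt_p : (p < (p + q).+1)%N by lia.
rewrite /ps_mul (bigD1 (Ordinal lt_p)) //= addKn big1 ?addr0 // => i ne_ip.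
have /eqP ne_ip' : nat_of_ord i != p.
  by apply: contra ne_ip => /eqP E; apply/eqP/val_inj.
have [lt_ip | le_pi] := ltnP i p; first by rewrite a0 // mul0r.
rewrite b0 ?mulr0 //; have := ltn_ord i; lia.
Qed.

Lemma vanishes_below_cancel f g s :
  vanishes_below f s -> vval g s ->
  vanishes_below (ps_add f (ps_mul g (ps_const (- f s / g s)))) s.+1.
Proof.
move=> f0 [gs g0]; apply: vanishes_belowS.
  by apply: vanishes_below_add => //; apply: vanishes_below_scale.
by rewrite /ps_add ps_mul_constE mulrCA mulfV // mulr1 subrr.
Qed.

Lemma vval_uniq f p q : vval f p -> vval f q -> p = q.
Proof.
move=> [fp f0p] [fq f0q]; case: (ltngtP p q) => // lt.
- by move: fp; rewrite f0q // eqxx.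
- by move: fq; rewrite f0p // eqxx.
Qed.

Lemma vval_exists f : f <> ps0 k -> exists n, vval f n.
Proof.
move=> fn0; have [p fp] : exists p, f p != 0.
  apply: NNPP => all0; apply: fn0; apply: functional_extensionality => n.
  by rewrite ps0E; apply/eqP; apply: NNPP => fn; apply: all0; exists n; apply/negP.
have ex : exists q, f q != 0 by exists p.
case: (ex_minnP ex) => q fq qmin; exists q; split => // i lt_iq.
by apply/eqP; apply: contraTT lt_iq => fi; rewrite -leqNgt; apply: qmin.
Qed.

Lemma vval_mul a b p q : vval a p -> vval b q -> vval (ps_mul a b) (p + q).
Proof.
move=> [ap a0] [bq b0]; split; last exact: vanishes_below_mul.
by rewrite ps_mul_lead // mulf_neq0.
Qed.

Lemma vval_mul_inv a b p n :
  vval a p -> vval (ps_mul a b) n -> (p <= n)%N /\ vval b (n - p).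
Proof.
move=> va vab; have [q vb] : exists q, vval b q.
  apply: vval_exists => b0; move: vab; rewrite b0 ps_mul0r => -[].
  by rewrite ps0E eqxx.
by rewrite (vval_uniq vab (vval_mul va vb)) leq_addr addKn.
Qed.

Lemma vval_add_high a g n :
  vval a n -> vanishes_below g n.+1 -> vval (ps_add a g) n.
Proof.
move=> [an a0] g0; split; first by rewrite /ps_add g0 ?addr0.
by apply: vanishes_below_add => //; apply: vanishes_below_le g0.
Qed.

Lemma vval_addr a b s :
  vanishes_below a s -> vanishes_below (ps_add a b) s -> ps_add a b s != a s ->
  vval b s.
Proof.
have Eb i : b i = ps_add a b i - a i by rewrite /ps_add addrC addKr.
by move=> a0 ab0 neq; split=> [|i lt_is]; rewrite Eb ?subr_eq0 // a0 ?ab0 ?subr0.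
Qed.

Section Division.
Variables (d g : series k) (n : nat).

(* Long division: the M-th coefficient of the quotient is solved from the
   coefficient of [t^(n+M)] in [d * h = g]. *)
Fixpoint quot_coefs (M : nat) : seq k :=
  if M is M'.+1 then
    let s := quot_coefs M' in
    rcons s ((g (n + M')%N - \sum_(i < M') d (n + M' - i)%N * nth 0 s i) / d n)
  else [::].

Definition ps_quot : series k := fun j => nth 0 (quot_coefs j.+1) j.

Lemma size_quot_coefs M : size (quot_coefs M) = M.
Proof. by elim: M => //= M IH; rewrite size_rcons IH. Qed.

Lemma nth_quot_coefs M i : (i < M)%N -> nth 0 (quot_coefs M) i = ps_quot i.
Proof.
elim: M => // M IH; rewrite ltnS leq_eqVlt => /orP [/eqP -> // | lt_iM].
by rewrite /= nth_rcons size_quot_coefs lt_iM IH.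
Qed.

Hypotheses (d_val : vval d n) (g_low : vanishes_below g n).

Lemma ps_quotE M :
  ps_quot M * d n = g (n + M)%N - \sum_(i < M) d (n + M - i)%N * ps_quot i.
Proof.
have [dn _] := d_val.
rewrite /ps_quot /= nth_rcons size_quot_coefs ltnn eqxx divfK //; congr (_ - _).
by apply: eq_bigr => i _; rewrite nth_quot_coefs.
Qed.

Lemma ps_mul_quot : ps_mul d ps_quot = g.
Proof.
have [_ d0] := d_val.
apply: functional_extensionality => N.
have [lt_Nn | le_nN] := ltnP N n.
  rewrite g_low // /ps_mul big1 // => i _; rewrite d0 ?mul0r //.
  have := ltn_ord i; lia.
have [M ->] : exists M, N = (n + M)%N by exists (N - n)%N; lia.
rewrite ps_mul_rev -(big_mkord xpredT (fun i => d (n + M - i)%N * ps_quot i)).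
rewrite (big_cat_nat (n := M.+1)) //=; last by lia.
rewrite [X in _ + X]big1_seq ?addr0; last first.
  by move=> i; rewrite mem_index_iota => /andP [lt_Mi lt_i]; rewrite d0 ?mul0r //; lia.
by rewrite big_nat_recr //= big_mkord addnK mulrC ps_quotE addrC subrK.
Qed.

End Division.

Lemma vanishes_below_mul_inv d h n M :
  vval d n -> vanishes_below (ps_mul d h) (n + M) -> vanishes_below h M.
Proof.
move=> [dn d0] dh0; elim/ltn_ind => j IH lt_jM.
have /eqP : ps_mul d h (n + j)%N = 0 by apply: dh0; lia.
rewrite ps_mul_lead // => [|i lt_ij]; last by apply: IH; lia.
by rewrite mulf_eq0 (negbTE dn) => /eqP.
Qed.

Lemma ps_divides d g n M :
  vval d n -> vanishes_below g (n + M) ->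
  exists h, g = ps_mul d h /\ vanishes_below h M.
Proof.
move=> dv g0; have g0n : vanishes_below g n by apply: vanishes_below_le g0; lia.
exists (ps_quot d g n); rewrite ps_mul_quot //; split => //.
by apply: (vanishes_below_mul_inv dv); rewrite ps_mul_quot.
Qed.

End PowerSeries.

Section Subspaces.
Variable k : fieldType.
Implicit Types (f g a b : series k) (c : k).

Definition ps_subspace (A : series k -> Prop) :=
  [/\ A (ps0 k), forall f g, A f -> A g -> A (ps_add f g) &
      forall f c, A f -> A (ps_mul f (ps_const c))].

Definition vset_cap_split (A B : series k -> Prop) :=
  forall n, vset (ideal_cap A B) n <-> vset A n /\ vset B n.

Definition vset_add_split (A B : series k -> Prop) :=
  forall n, vset (ideal_add A B) n <-> vset A n \/ vset B n.

Lemma subspace_axpy (C : series k -> Prop) f g c :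
  ps_subspace C -> C f -> C g -> C (ps_add f (ps_mul g (ps_const c))).
Proof. by case=> _ Cadd Cscale Cf Cg; apply: Cadd => //; apply: Cscale. Qed.

Variables (A B : series k -> Prop).
Hypotheses (A_sub : ps_subspace A) (B_sub : ps_subspace B).

Lemma vset_cap_sub n : vset (ideal_cap A B) n -> vset A n /\ vset B n.
Proof. by move=> [a [[Aa Ba] va]]; split; exists a. Qed.

Lemma vset_cup_sub n : vset A n \/ vset B n -> vset (ideal_add A B) n.
Proof.
have [[A0 _ _] [B0 _ _]] := (A_sub, B_sub).
case=> [[a [Aa va]] | [b [Bb vb]]].
  exists a; split => //; exists a, (ps0 k); do 2?split => //.
  by apply: functional_extensionality => j; rewrite /ps_add ps0E addr0.
exists b; split => //; exists (ps0 k), b; do 2?split => //.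
by apply: functional_extensionality => j; rewrite /ps_add ps0E add0r.
Qed.

Lemma ideal_add_axpyl f g c :
  ideal_add A B f -> A g -> ideal_add A B (ps_add f (ps_mul g (ps_const c))).
Proof.
move=> [a [b [Aa [Bb ->]]]] Ag; exists (ps_add a (ps_mul g (ps_const c))), b.
split; first exact: subspace_axpy.
by split => //; apply: functional_extensionality => j; rewrite /ps_add addrAC.
Qed.

Lemma ideal_add_axpyr f g c :
  ideal_add A B f -> B g -> ideal_add A B (ps_add f (ps_mul g (ps_const c))).
Proof.
move=> [a [b [Aa [Bb ->]]]] Bg; exists a, (ps_add b (ps_mul g (ps_const c))).
split => //; split; first exact: subspace_axpy.
by apply: functional_extensionality => j; rewrite /ps_add addrA.
Qed.

(* If v(a + b) = n but the summands have a common smaller valuation s, an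
   element of the intersection with valuation s shifts both summands so that
   the part in A vanishes to one more order. *)
Lemma vset_add_split_of_cap_split : vset_cap_split A B -> vset_add_split A B.
Proof.
move=> capAB n; split; last exact: vset_cup_sub.
move=> [_ [[a [b [Aa [Bb ->]]]] vab]].
pose Q s := forall a b, A a -> B b -> vval (ps_add a b) n ->
  vanishes_below a s -> vset A n \/ vset B n.
suff /(_ 0%N a b Aa Bb vab) : forall s, Q s by apply.
clear a b Aa Bb vab.
apply: (@nat_ind_down n) => [s le_ns | s lt_sn IH] a b Aa Bb vab a0;
  have [abn ab0] := vab.
  have {}a0 : vanishes_below a n by apply: vanishes_below_le a0.
  have [an0 | an] := eqVneq (a n) 0.
    by right; exists b; split => //; apply: (vval_addr a0) => //; rewrite an0.
  by left; exists a.
have [as0 | asn0] := eqVneq (a s) 0; first by apply: (IH a b) => //; apply: vanishes_belowS.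
have ab0s : vanishes_below (ps_add a b) s by apply: vanishes_below_le ab0; lia.
have vb : vval b s by apply: (vval_addr a0 ab0s); rewrite ab0 // eq_sym.
have [c [[Ac Bc] vc]] := (capAB s).2 (conj (ex_intro _ a (conj Aa (conj asn0 a0)))
                                           (ex_intro _ b (conj Bb vb))).
set lam := - a s / c s.
apply: (IH (ps_add a (ps_mul c (ps_const lam))) (ps_add b (ps_mul c (ps_const (- lam))))).
- exact: subspace_axpy.
- exact: subspace_axpy.
- have -> : ps_add (ps_add a (ps_mul c (ps_const lam)))
                  (ps_add b (ps_mul c (ps_const (- lam)))) = ps_add a b.
    apply: functional_extensionality => j; rewrite /ps_add !ps_mul_constE mulrN.
    by rewrite addrACA subrr addr0.
  by split.
- exact: vanishes_below_cancel.
Qed.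

Section Tail.
Variable N : nat.
Hypothesis A_tail : forall g, vanishes_below g N -> A g.

Lemma ideal_add_split_vanishing :
  vset_add_split A B -> forall s f, ideal_add A B f -> vanishes_below f s ->
  exists a b, [/\ A a, B b, f = ps_add a b, vanishes_below a s & vanishes_below b s].
Proof.
have [B0 _ _] := B_sub.
move=> addAB; apply: (@nat_ind_down N) => [s le_Ns | s lt_sN IH] f ABf f0.
  exists f, (ps0 k); split => //; first by apply/A_tail/(vanishes_below_le le_Ns).
    by apply: functional_extensionality => j; rewrite /ps_add ps0E addr0.
  by move=> j _; rewrite ps0E.
have [fs0 | fs] := eqVneq (f s) 0.
  have [a [b [Aa Bb Ef a0 b0]]] := IH f ABf (vanishes_belowS f0 fs0).
  by exists a, b; split => //; [apply: vanishes_below_le a0 | apply: vanishes_below_le b0].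
case: ((addAB s).1 (ex_intro _ f (conj ABf (conj fs f0))))
  => [[g [Ag vg]] | [g [Bg vg]]]; set lam := - f s / g s;
  have g0 : vanishes_below (ps_mul g (ps_const (- lam))) s
    by apply: vanishes_below_scale; case: vg.
- have [a2 [b2 [Aa2 Bb2 /ps_add_shiftl Ef' a20 b20]]] :=
    IH _ (ideal_add_axpyl lam ABf Ag) (vanishes_below_cancel f0 vg).
  exists (ps_add a2 (ps_mul g (ps_const (- lam)))), b2; split => //.
  + exact: subspace_axpy.
  + by apply: vanishes_below_add => //; apply: vanishes_below_le a20.
  + exact: vanishes_below_le b20.
- have [a2 [b2 [Aa2 Bb2 /ps_add_shiftr Ef' a20 b20]]] :=
    IH _ (ideal_add_axpyr lam ABf Bg) (vanishes_below_cancel f0 vg).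
  exists a2, (ps_add b2 (ps_mul g (ps_const (- lam)))); split => //.
  + exact: subspace_axpy.
  + exact: vanishes_below_le a20.
  + by apply: vanishes_below_add => //; apply: vanishes_below_le b20.
Qed.

(* For v(a) = v(b) = n, split a + lam b, of order > n, into summands of order > n;
   then a minus its A-summand lies in both A and B and still has valuation n. *)
Lemma vset_cap_split_of_add_split : vset_add_split A B -> vset_cap_split A B.
Proof.
move=> addAB n; split; first exact: vset_cap_sub.
move=> [[a [Aa va]] [b [Bb vb]]].
set lam := - a n / b n.
have ABg : ideal_add A B (ps_add a (ps_mul b (ps_const lam))).
  by exists a, (ps_mul b (ps_const lam)); do 2?split => //; case: B_sub => _ _; apply.
have [a2 [b2 [Aa2 Bb2 /ps_add_shiftr Ea a20 b20]]] :=
  ideal_add_split_vanishing addAB ABg (vanishes_below_cancel va.2 vb).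
set c := ps_add b2 (ps_mul b (ps_const (- lam))).
have Ec : c = ps_add a (ps_mul a2 (ps_const (-1))).
  apply: functional_extensionality => j; rewrite /c Ea /ps_add /= !ps_mul_constE.
  by rewrite mulrN1 addrAC subrr add0r.
exists c; split; first split.
- rewrite Ec; exact: subspace_axpy.
- exact: subspace_axpy.
- by rewrite Ec; apply: vval_add_high => //; apply: vanishes_below_scale.
Qed.

End Tail.
End Subspaces.

Lemma vset_sub (k : fieldType) (A B : series k -> Prop) n :
  (forall f, A f -> B f) -> vset A n -> vset B n.
Proof. by move=> AB [f [Af vf]]; exists f; split => //; apply: AB. Qed.

Lemma ideal_mul_subr (k : fieldType) (A B C : series k -> Prop) f :
  (forall g, B g -> C g) -> ideal_mul A B f -> ideal_mul A C f.
Proof.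
move=> BC [s [sAB ->]]; exists s; split => // p ps.
by have [? ?] := sAB p ps; split => //; apply: BC.
Qed.

Section LocalRing.
Variables (k : fieldType) (R : series k -> Prop) (x : series k) (e : nat).
Hypotheses (R_subring : subring_with_k R) (R_conductor : conductor_nonzero R).
Hypotheses (R_local : local_residue_k R) (e_mult : is_multiplicity (vset R) e).
Hypotheses (x_R : R x) (x_val : vval x e).
Implicit Types (f g a b : series k) (c : k).

Local Notation m := (nonunits R).
Local Notation I := (ideal_pow R m).
Local Notation J := (principal R x).

Lemma R_const c : R (ps_const c). Proof. by case: R_subring. Qed.
Lemma R_add f g : R f -> R g -> R (ps_add f g). Proof. by case: R_subring => _ + _ _; apply. Qed.
Lemma R_opp f : R f -> R (ps_opp f). Proof. by case: R_subring => _ _ + _; apply. Qed.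
Lemma R_mul f g : R f -> R g -> R (ps_mul f g). Proof. by case: R_subring => _ _ _; apply. Qed.

Lemma nonunit_of_coef0 f : R f -> f 0%N = 0 -> m f.
Proof.
move=> Rf f0; split => // -[s [_ fs1]].
move/(congr1 (fun h => h 0%N)): fs1; rewrite ps_mul_coef0 f0 mul0r.
by move/eqP; rewrite eq_sym oner_eq0.
Qed.

(* If f(0) != 0, adding the nonunit f(0) - f to f gives the unit f(0). *)
Lemma nonunit_coef0 f : m f -> f 0%N = 0.
Proof.
move=> mf; apply/eqP/negPn/negP => f0; have Rf := mf.1.
set g := ps_opp (ps_add f (ps_opp (ps_const (f 0%N)))).
have mg : m g.
  apply: nonunit_of_coef0; first by apply/R_opp/R_add/R_opp/R_const.
  by rewrite /g /ps_opp /ps_add /= subrr oppr0.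
have := R_local.1 _ _ mf mg.
have -> : ps_add f g = ps_const (f 0%N).
  by apply: functional_extensionality => n; rewrite /g /ps_add /ps_opp opprB addrC subrK.
case=> _; apply; exists (ps_const (f 0%N)^-1); split; first exact: R_const.
by apply: functional_extensionality => -[|n]; rewrite ps_mul_constE /= ?mulfV ?mul0r.
Qed.

Lemma x_nonunit : m x.
Proof. by apply: nonunit_of_coef0 => //; apply: x_val.2; case: e_mult. Qed.

Lemma sum_prods_R (s : seq (series k * series k)) :
  (forall p, List.In p s -> R p.1 /\ R p.2) -> R (sum_prods s).
Proof.
elim: s => [|p s IH] sR /=; first exact: R_const.
have [Rp1 Rp2] := sR p (or_introl erefl).
by apply: R_add; [apply: R_mul | apply: IH => q qs; apply: sR; right].
Qed.

Lemma ideal_pow_subR i f : I i f -> R f.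
Proof.
elim: i f => [|i IH] f //= [s [sI ->]]; apply: sum_prods_R => p ps.
by have [mp Ip] := sI p ps; split; [apply: mp.1 | apply: IH].
Qed.

Lemma ideal_pow_antitone i j f : (i <= j)%N -> I j f -> I i f.
Proof.
have Idec n g : I n.+1 g -> I n g.
  elim: n g => [|n IH] g; first exact: ideal_pow_subR.
  by apply: ideal_mul_subr.
move=> le_ij; elim: j le_ij f => [|j IH]; first by rewrite leqn0 => /eqP ->.
by rewrite leq_eqVlt => /orP [/eqP -> // | le_ij] f /Idec; apply: IH.
Qed.

Lemma ideal_pow_subspace i : ps_subspace (I i).
Proof.
elim: i => [|i [_ _ Iscale]].
  by split=> [|f g|f c]; [apply: R_const | apply: R_add | move=> Rf; apply/R_mul/R_const].
split=> [|f g|f c]; first by exists [::].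
  move=> [s1 [s1I ->]] [s2 [s2I ->]]; exists (s1 ++ s2); rewrite sum_prods_cat.
  by split=> // p p_in; case: (List.in_app_or _ _ _ p_in) => [/s1I | /s2I].
move=> [s [sI ->]]; rewrite sum_prods_scale; eexists; split; last reflexivity.
by move=> _ /List.in_map_iff [p [<- ps]]; have [? ?] := sI p ps; split => //; apply: Iscale.
Qed.

Lemma ideal_pow_vanishes i f : I i f -> vanishes_below f i.
Proof.
elim: i f => [|i IH] f //= [s [sI ->]].
elim: s sI => [|p s IHs] sI j lt_ji /=; first by rewrite ps0E.
rewrite /ps_add IHs ?addr0 // => [|q qs]; last by apply: sI; right.
have [mp Ip] := sI p (or_introl erefl).
apply: (@vanishes_below_mul _ _ _ 1 i) => //; last exact: IH.
by case=> // _; apply: nonunit_coef0.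
Qed.

Lemma vset_ideal_pow_le i n : vset (I i) n -> (i <= n)%N.
Proof.
move=> [a [Ia [an _]]]; rewrite leqNgt; apply: contra an => lt_ni.
by rewrite (ideal_pow_vanishes Ia).
Qed.

Lemma principal_subR f : J f -> R f.
Proof. by move=> [r [Rr ->]]; apply: R_mul. Qed.

Lemma principal_subspace : ps_subspace J.
Proof.
split=> [|f g|f c]; first by exists (ps0 k); rewrite ps_mul0r; split => //; apply: R_const.
  by move=> [r [Rr ->]] [s [Rs ->]]; exists (ps_add r s); rewrite ps_mulDr; split => //; apply: R_add.
move=> [r [Rr ->]]; exists (ps_mul r (ps_const c)); rewrite ps_mul_constA.
by split => //; apply/R_mul/R_const.
Qed.

(* The conductor gives the case i = 0; each further power costs a factor x. *)
Lemma ideal_pow_tail i : exists N, forall g, vanishes_below g N -> I i g.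
Proof.
elim: i => [|i [N IH]].
  have [a [a0 aR]] := R_conductor; have [c va] := vval_exists a0.
  exists c => g g0; have [|h [-> _]] := @ps_divides _ a g c 0 va; last exact: aR.
  by rewrite addn0.
exists (e + N)%N => g g0; have [h [-> h0]] := ps_divides x_val g0.
exists [:: (x, h)]; split => [p [<-|//]|]; first by split; [apply: x_nonunit | apply: IH].
by apply: functional_extensionality => n; rewrite /= /ps_add ps0E addr0.
Qed.

Lemma vset_principal_inv n : vset J n -> (e <= n)%N /\ vset R (n - e).
Proof.
move=> [_ [[r [Rr ->]] vxr]]; have [le_en vr] := vval_mul_inv x_val vxr.
by split => //; exists r.
Qed.

Lemma vset_principalD s : vset R s -> vset J (e + s).
Proof. by move=> [r [Rr vr]]; exists (ps_mul x r); split; [exists r | apply: vval_mul]. Qed.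

Lemma vset_principal_addmul s q : vset R s -> (0 < q)%N -> vset J (s + q * e).
Proof.
move=> Ss; elim: q => [//|[|q] IH] _; first by rewrite mul1n addnC; apply: vset_principalD.
rewrite mulSn addnCA; apply/vset_principalD/(vset_sub principal_subR).
exact: IH.
Qed.

Lemma vord_exists u : vset R u -> exists N, is_max (fun i => vset (I i) u) N.
Proof. by move=> Su; apply: (@is_max_exists _ 0 u) => // i; apply: vset_ideal_pow_le. Qed.

Lemma cap_split_of_ess_divisible :
  ess_divisible R m x -> forall i, vset_cap_split (I i) J.
Proof.
move=> ed i n; split; first exact: vset_cap_sub.
move=> [vI vJ]; have [a [Ja [va [N [[IaN _] [_ Nmax]]]]]] := ed n vJ.
by exists a; split => //; split => //; apply: ideal_pow_antitone IaN; apply: Nmax.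
Qed.

Lemma ess_divisible_of_cap_split :
  (forall i, vset_cap_split (I i) J) -> ess_divisible R m x.
Proof.
move=> cap u vJ; have [N [vIN Nmax]] := vord_exists (vset_sub principal_subR vJ).
have [a [[Ia Ja] va]] := (cap N u).2 (conj vIN vJ).
exists a; split => //; split => //; exists N.
by split; split => // i Iia; apply: Nmax; exists a.
Qed.

Lemma add_split_of_cap_split i : vset_cap_split (I i) J -> vset_add_split (I i) J.
Proof. by apply: vset_add_split_of_cap_split; [apply: ideal_pow_subspace | apply: principal_subspace]. Qed.

Lemma cap_split_of_add_split i : vset_add_split (I i) J -> vset_cap_split (I i) J.
Proof.
have [N tail] := ideal_pow_tail i.
by apply: (vset_cap_split_of_add_split _ principal_subspace tail); apply: ideal_pow_subspace.
Qed.

Lemma apery_notin_principal j w : is_apery (vset R) e j w -> ~ vset J w.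
Proof.
move=> [_ [w_mod wmin]] /vset_principal_inv [le_ew Swe].
have e_pos : (0 < e)%N by case: e_mult.
have : (w <= w - e)%N by apply: wmin => //; rewrite -w_mod -{2}(subnK le_ew) modnDr.
lia.
Qed.

Lemma apery_max_of_add_split :
  (forall i, vset_add_split (I i) J) ->
  forall j, (j < e)%N -> forall w, is_apery (vset R) e j w ->
    exists n, is_max (fun i => vset (I i) w) n /\
              is_max (fun i => vset (ideal_add (I i) J) w) n.
Proof.
move=> add j _ w wap; have [N [vIN Nmax]] := vord_exists wap.1.
exists N; do 2!split => //.
  by apply: vset_cup_sub; [apply: ideal_pow_subspace | apply: principal_subspace | left].
by move=> i /(add i w).1 [/Nmax // | /(apery_notin_principal wap)].
Qed.

(* An element of v(m^i + xR) outside v(xR) is an Apery element, since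
   v(xR) = e + S contains every element of S above the Apery element of its class. *)
Lemma add_split_of_apery_max :
  (forall j, (j < e)%N -> forall w, is_apery (vset R) e j w ->
    exists n, is_max (fun i => vset (I i) w) n /\
              is_max (fun i => vset (ideal_add (I i) J) w) n) ->
  forall i, vset_add_split (I i) J.
Proof.
move=> apery i n; split; last first.
  by apply: vset_cup_sub; [apply: ideal_pow_subspace | apply: principal_subspace].
move=> vadd; have [vJ | nvJ] := classic (vset J n); [by right | left].
have Sn : vset R n.
  apply: vset_sub vadd => _ [a [b [Ia [Jb ->]]]].
  by apply: R_add; [apply: ideal_pow_subR Ia | apply: principal_subR].
have e_pos : (0 < e)%N by case: e_mult.
have [w [[Sw w_mod] wmin]] :=
  @exists_min (fun s => vset R s /\ s = n %% e %[mod e]) n (conj Sn (esym (modn_mod _ _))).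
have wap : is_apery (vset R) e (n %% e) w by split => //; split => // s Ss s_mod; apply: wmin.
have [N [[vIN _] [_ Nmax]]] := apery _ (ltn_pmod n e_pos) w wap.
have le_wn : (w <= n)%N by apply: wmin; rewrite modn_mod.
suff En : n = w.
  by rewrite En in vadd *; apply: vset_sub vIN => f; apply: ideal_pow_antitone; apply: Nmax.
apply/eqP; rewrite eqn_leq le_wn andbT leqNgt; apply: contra_notN nvJ => lt_wn.
have /dvdnP [q Eq] : (e %| n - w)%N by rewrite -eqn_mod_dvd // w_mod modn_mod.
have q_pos : (0 < q)%N by rewrite lt0n; apply: contraTneq lt_wn => q0; move: Eq; rewrite q0; lia.
by rewrite (_ : n = w + q * e)%N; [apply: vset_principal_addmul | lia].
Qed.

End LocalRing.

Theorem proposition1p2 (k : fieldType) (R : series k -> Prop) (x : series k) (e : nat) :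
  subring_with_k R ->
  conductor_nonzero R ->
  local_residue_k R ->
  is_multiplicity (vset R) e ->
  R x -> vval x e ->
  let m := nonunits R in
  [<-> ess_divisible R m x;
       forall i, forall n,
         vset (ideal_cap (ideal_pow R m i) (principal R x)) n <->
         vset (ideal_pow R m i) n /\ vset (principal R x) n;
       forall i, forall n,
         vset (ideal_add (ideal_pow R m i) (principal R x)) n <->
         vset (ideal_pow R m i) n \/ vset (principal R x) n;
       forall j, (j < e)%N -> forall w, is_apery (vset R) e j w ->
         exists n, is_max (fun i => vset (ideal_pow R m i) w) n /\
                   is_max (fun i => vset (ideal_add (ideal_pow R m i) (principal R x)) w) n].
Proof.
move=> R_subring R_conductor R_local e_mult x_R x_val m; tfae.
- exact: cap_split_of_ess_divisible R_subring.
- by move=> cap i; apply: add_split_of_cap_split R_subring i (cap i).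
- exact: apery_max_of_add_split R_subring R_local e_mult x_val.
- move=> apery; apply: (ess_divisible_of_cap_split R_subring R_local x_R) => i.
  apply: (cap_split_of_add_split R_subring R_conductor e_mult x_R x_val).
  exact: add_split_of_apery_max R_subring e_mult x_R x_val apery i.
Qed.
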